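(* Let $k\ge 3$ and let $\mathcal G$ be an exactly $2$-intersecting family of $k$ compact convex sets in the plane. Then the union complexity of $\mathcal G$ is at least $\binom k2$.
   Context: A finite family of sets is exactly $2$-intersecting if every two of its members intersect but no three of its members have a common point. The union complexity of a finite family $\mathcal G$ of planar regions is the number of vertices (points belonging to the boundaries of two distinct members of $\mathcal G$) that lie on the boundary of $\bigcup_{G\in\mathcal G}G$. *)

From Stdlib Require Import Reals List Arith.
Open Scope R_scope.

Definition point := (R * R)%type.
Definition region := point -> Prop.

Definition dist2 (p q : point) : R :=
  (fst p - fst q)^2 + (snd p - snd q)^2.

Definition in_ball (p : point) (e : R) (q : point) : Prop := dist2 p q < e^2.

Definition convex_set (S : region) : Prop :=
  forall x y : point, S x -> S y -> forall t : R, 0 <= t <= 1 ->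
    S ((1 - t) * fst x + t * fst y, (1 - t) * snd x + t * snd y).

Definition closed_set (S : region) : Prop :=
  forall p : point, ~ S p -> exists e, 0 < e /\ forall q, in_ball p e q -> ~ S q.

Definition bounded (S : region) : Prop :=
  exists M : R, forall p : point, S p -> dist2 p (0, 0) <= M.

Definition compact_set (S : region) : Prop := closed_set S /\ bounded S.

Definition boundary (S : region) (p : point) : Prop :=
  forall e, 0 < e ->
    (exists q, in_ball p e q /\ S q) /\ (exists q, in_ball p e q /\ ~ S q).

Definition exactly_2_intersecting (k : nat) (G : nat -> region) : Prop :=
  (forall i j, (i < k)%nat -> (j < k)%nat -> i <> j ->
     exists p, G i p /\ G j p) /\
  (forall i j l, (i < k)%nat -> (j < k)%nat -> (l < k)%nat ->
     i <> j -> j <> l -> i <> l -> ~ (exists p, G i p /\ G j p /\ G l p)).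

Definition family_union (k : nat) (G : nat -> region) : region :=
  fun p => exists i, (i < k)%nat /\ G i p.

Definition vertex (k : nat) (G : nat -> region) (p : point) : Prop :=
  exists i j, (i < k)%nat /\ (j < k)%nat /\ i <> j /\
    boundary (G i) p /\ boundary (G j) p.

Definition union_vertex (k : nat) (G : nat -> region) (p : point) : Prop :=
  vertex k G p /\ boundary (family_union k G) p.

(* "union complexity >= n": at least n distinct such points
   (this also covers the case of infinitely many) *)
Definition union_complexity_ge (k : nat) (G : nat -> region) (n : nat) : Prop :=
  exists l : list point, length l = n /\ NoDup l /\
    forall p, In p l -> union_vertex k G p.

Definition binom2 (k : nat) : nat := Nat.div (k * (k - 1)) 2.

From Stdlib Require Import Reals List Arith Lra Lia Psatz Classical ClassicalEpsilon.
Open Scope R_scope.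

(* For a pair G_i, G_j pick a third member G_l and points c in G_i /\ G_j, x in G_i /\ G_l,
   y in G_j /\ G_l.  In affine coordinates of the triangle cxy, take a point w of G_i /\ G_j
   in the triangle maximising u + v; it lies off the edge xy, which is inside G_l.  Points
   outside G_i \/ G_j come arbitrarily close to w: otherwise a short segment beyond w from
   the G_i-side to the G_j-side would be covered by these two closed sets, so by
   connectedness it would meet G_i /\ G_j, contradicting maximality.  As no point lies in
   three members, the other closed members stay away from w, so w is a vertex on the
   boundary of the union; and distinct pairs give distinct vertices. *)

Lemma dist2_nonneg p q : 0 <= dist2 p q.
Proof.
  unfold dist2; pose proof (pow2_ge_0 (fst p - fst q)); pose proof (pow2_ge_0 (snd p - snd q)).
  lra.
Qed.

Lemma in_ball_self p e : 0 < e -> in_ball p e p.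
Proof.
  intros He; unfold in_ball, dist2.
  replace ((fst p - fst p)^2 + (snd p - snd p)^2) with 0 by ring.
  apply pow_lt; exact He.
Qed.

Lemma in_ball_mono p r r' q : 0 < r' -> r' <= r -> in_ball p r' q -> in_ball p r q.
Proof.
  unfold in_ball; intros Hr' Hle Hq.
  assert (r'^2 <= r^2) by (apply pow_incr; lra). lra.
Qed.

Lemma sqr_lt_bounds x r : 0 < r -> x^2 < r^2 -> - r < x < r.
Proof. intros; split; nra. Qed.

Lemma in_ball_coord_bounds p e q : 0 < e -> in_ball p e q ->
  Rabs (fst q - fst p) < e /\ Rabs (snd q - snd p) < e.
Proof.
  unfold in_ball, dist2; intros He Hq.
  pose proof (pow2_ge_0 (fst p - fst q)); pose proof (pow2_ge_0 (snd p - snd q)).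
  assert (H1 : - e < fst q - fst p < e) by (apply sqr_lt_bounds; nra).
  assert (H2 : - e < snd q - snd p < e) by (apply sqr_lt_bounds; nra).
  split; apply Rabs_def1; lra.
Qed.

Lemma closed_set_limit (S : region) p :
  closed_set S -> (forall e, 0 < e -> exists q, in_ball p e q /\ S q) -> S p.
Proof.
  intros HS Hlim. apply NNPP; intro Hp.
  destruct (HS p Hp) as [e [He Hout]].
  destruct (Hlim e He) as [q [Hq HSq]]. exact (Hout q Hq HSq).
Qed.

Lemma closed_set_inter (S T : region) :
  closed_set S -> closed_set T -> closed_set (fun p => S p /\ T p).
Proof.
  intros HS HT p Hp.
  destruct (classic (S p)) as [HSp | HSp].
  - assert (HTp : ~ T p) by tauto.
    destruct (HT p HTp) as [e [He Hout]]. exists e; split; [exact He|].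
    intros q Hq [_ HTq]. exact (Hout q Hq HTq).
  - destruct (HS p HSp) as [e [He Hout]]. exists e; split; [exact He|].
    intros q Hq [HSq _]. exact (Hout q Hq HSq).
Qed.

Lemma closed_halfplane a b c : closed_set (fun p => a * fst p + b * snd p <= c).
Proof.
  intros p Hp. apply Rnot_le_lt in Hp.
  set (r := (a * fst p + b * snd p - c) / (Rabs a + Rabs b + 1)).
  assert (Hab : 0 <= Rabs a + Rabs b) by (pose proof (Rabs_pos a); pose proof (Rabs_pos b); lra).
  assert (Hr : 0 < r) by (apply Rdiv_lt_0_compat; lra).
  assert (Hrr : (Rabs a + Rabs b) * r < a * fst p + b * snd p - c).
  { unfold r. apply (Rmult_lt_reg_r (Rabs a + Rabs b + 1)); [lra|].
    field_simplify; [nra | lra]. }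
  exists r; split; [exact Hr|]. intros q Hq Hle.
  destruct (in_ball_coord_bounds p r q Hr Hq) as [H1 H2].
  assert (Ha : Rabs (a * (fst q - fst p)) <= Rabs a * r)
    by (rewrite Rabs_mult; apply Rmult_le_compat_l; [apply Rabs_pos | lra]).
  assert (Hb : Rabs (b * (snd q - snd p)) <= Rabs b * r)
    by (rewrite Rabs_mult; apply Rmult_le_compat_l; [apply Rabs_pos | lra]).
  pose proof (Rle_abs (- (a * (fst q - fst p)))). pose proof (Rle_abs (- (b * (snd q - snd p)))).
  rewrite Rabs_Ropp in *. nra.
Qed.

Definition continuous_map (f : point -> point) : Prop :=
  forall p e, 0 < e -> exists d, 0 < d /\ forall q, in_ball p d q -> in_ball (f p) e (f q).

Lemma closed_set_preimage (f : point -> point) (S : region) :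
  continuous_map f -> closed_set S -> closed_set (fun p => S (f p)).
Proof.
  intros Hf HS p Hp.
  destruct (HS (f p) Hp) as [e [He Hout]].
  destruct (Hf p e He) as [d [Hd Hball]].
  exists d; split; [exact Hd|]. intros q Hq. exact (Hout (f q) (Hball q Hq)).
Qed.

Lemma lipschitz_radius L e x :
  0 <= L -> 0 < e -> 0 <= x -> x < (e / (L + 1))^2 -> L * x < e^2.
Proof.
  intros HL He Hx Hlt.
  replace ((e / (L + 1))^2) with (e^2 / (L + 1)^2) in Hlt by (field; lra).
  assert (He2 : 0 < e^2) by (apply pow_lt; exact He).
  apply (Rmult_lt_compat_l ((L + 1)^2)) in Hlt; [|nra].
  replace ((L + 1)^2 * (e^2 / (L + 1)^2)) with (e^2) in Hlt by (field; lra).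
  nra.
Qed.

Lemma lipschitz_continuous (f : point -> point) L :
  0 <= L -> (forall p q, dist2 (f p) (f q) <= L * dist2 p q) -> continuous_map f.
Proof.
  intros HL Hf p e He. exists (e / (L + 1)).
  split; [apply Rdiv_lt_0_compat; lra|]. intros q Hq.
  unfold in_ball in *.
  pose proof (dist2_nonneg p q) as Hpq.
  pose proof (lipschitz_radius L e (dist2 p q) HL He Hpq Hq).
  pose proof (Hf p q). lra.
Qed.

Definition affine_map (c x y p : point) : point :=
  (fst c + fst p * (fst x - fst c) + snd p * (fst y - fst c),
   snd c + fst p * (snd x - snd c) + snd p * (snd y - snd c)).

Lemma affine_map_origin c x y : affine_map c x y (0, 0) = c.
Proof. destruct c; unfold affine_map; simpl; f_equal; ring. Qed.

Lemma affine_map_e1 c x y : affine_map c x y (1, 0) = x.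
Proof. destruct x; unfold affine_map; simpl; f_equal; ring. Qed.

Lemma affine_map_e2 c x y : affine_map c x y (0, 1) = y.
Proof. destruct y; unfold affine_map; simpl; f_equal; ring. Qed.

Definition segment_point (p q : point) (l : R) : point :=
  ((1 - l) * fst p + l * fst q, (1 - l) * snd p + l * snd q).

Lemma segment_point_0 p q : segment_point p q 0 = p.
Proof. destruct p; unfold segment_point; simpl; f_equal; ring. Qed.

Lemma segment_point_1 p q : segment_point p q 1 = q.
Proof. destruct q; unfold segment_point; simpl; f_equal; ring. Qed.

Lemma convex_segment_point (S : region) p q l :
  convex_set S -> S p -> S q -> 0 <= l <= 1 -> S (segment_point p q l).
Proof. intros HS Hp Hq Hl; exact (HS p q Hp Hq l Hl). Qed.

Lemma affine_map_segment_point c x y p q l :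
  affine_map c x y (segment_point p q l) =
  segment_point (affine_map c x y p) (affine_map c x y q) l.
Proof. unfold affine_map, segment_point; simpl; f_equal; ring. Qed.

Lemma convex_set_affine_preimage (S : region) c x y :
  convex_set S -> convex_set (fun p => S (affine_map c x y p)).
Proof.
  intros HS p q Hp Hq l Hl.
  change (S (affine_map c x y (segment_point p q l))).
  rewrite affine_map_segment_point. exact (HS _ _ Hp Hq l Hl).
Qed.

Lemma cauchy_schwarz2 a b X Y : (a * X + b * Y)^2 <= (a^2 + b^2) * (X^2 + Y^2).
Proof.
  assert (0 <= (a * Y - b * X)^2) by apply pow2_ge_0.
  replace ((a^2 + b^2) * (X^2 + Y^2)) with ((a * X + b * Y)^2 + (a * Y - b * X)^2) by ring.
  lra.
Qed.

Lemma affine_map_continuous c x y : continuous_map (affine_map c x y).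
Proof.
  set (X1 := fst x - fst c). set (Y1 := fst y - fst c).
  set (X2 := snd x - snd c). set (Y2 := snd y - snd c).
  apply (lipschitz_continuous _ (X1^2 + Y1^2 + (X2^2 + Y2^2))); [nra|].
  intros p q. unfold dist2, affine_map; simpl. fold X1 Y1 X2 Y2.
  pose proof (cauchy_schwarz2 (fst p - fst q) (snd p - snd q) X1 Y1).
  pose proof (cauchy_schwarz2 (fst p - fst q) (snd p - snd q) X2 Y2).
  replace (fst c + fst p * X1 + snd p * Y1 - (fst c + fst q * X1 + snd q * Y1))
    with ((fst p - fst q) * X1 + (snd p - snd q) * Y1) by ring.
  replace (snd c + fst p * X2 + snd p * Y2 - (snd c + fst q * X2 + snd q * Y2))
    with ((fst p - fst q) * X2 + (snd p - snd q) * Y2) by ring.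
  nra.
Qed.

Lemma closed_segment_limit (S : region) p q l :
  closed_set S ->
  (forall d, 0 < d -> exists l', Rabs (l' - l) < d /\ S (segment_point p q l')) ->
  S (segment_point p q l).
Proof.
  intros HS Hlim. apply closed_set_limit; [exact HS|]. intros e He.
  set (D := dist2 p q).
  assert (HD : 0 <= D) by apply dist2_nonneg.
  destruct (Hlim (e / (D + 1))) as [l' [Hl' HSl']]; [apply Rdiv_lt_0_compat; lra|].
  exists (segment_point p q l'); split; [|exact HSl'].
  unfold in_ball.
  replace (dist2 (segment_point p q l) (segment_point p q l')) with (D * (l' - l)^2)
    by (unfold D, dist2, segment_point; simpl; ring).
  apply lipschitz_radius; [exact HD | exact He | apply pow2_ge_0|].
  rewrite <- pow2_abs. pose proof (Rabs_pos (l' - l)). nra.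
Qed.

Lemma segment_closed_cover_meet (A B : region) p q :
  closed_set A -> closed_set B -> A p -> B q ->
  (forall l, 0 <= l <= 1 -> A (segment_point p q l) \/ B (segment_point p q l)) ->
  exists l, 0 <= l <= 1 /\ A (segment_point p q l) /\ B (segment_point p q l).
Proof.
  intros clA clB Ap Bq Hcover.
  set (E := fun l => 0 <= l <= 1 /\ A (segment_point p q l)).
  destruct (completeness E) as [ls [Hub Hlub]].
  { exists 1. intros l [Hl _]; lra. }
  { exists 0. split; [lra|]. rewrite segment_point_0; exact Ap. }
  assert (Hls0 : 0 <= ls) by (apply Hub; split; [lra|]; rewrite segment_point_0; exact Ap).
  assert (Hls1 : ls <= 1) by (apply Hlub; intros l [Hl _]; lra).
  assert (HAls : A (segment_point p q ls)).
  { apply closed_segment_limit; [exact clA|]. intros d Hd.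
    apply NNPP; intro HN.
    assert (ls <= ls - d); [|lra].
    apply Hlub. intros l [Hl HAl].
    destruct (Rle_or_lt l (ls - d)) as [|Hlt]; [assumption|]. exfalso. apply HN.
    exists l. split; [|exact HAl].
    assert (l <= ls) by (apply Hub; split; assumption).
    rewrite Rabs_left1; lra. }
  assert (HBls : B (segment_point p q ls)).
  { apply closed_segment_limit; [exact clB|]. intros d Hd.
    destruct (Req_dec ls 1) as [Heq | Hne].
    - exists 1. rewrite Heq, Rminus_diag, Rabs_R0, segment_point_1. split; assumption.
    - set (l := ls + Rmin d (1 - ls) / 2).
      assert (0 < Rmin d (1 - ls)) by (apply Rmin_glb_lt; lra).
      pose proof (Rmin_l d (1 - ls)). pose proof (Rmin_r d (1 - ls)).
      exists l. split; [unfold l; rewrite Rabs_right; lra|].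
      destruct (Hcover l) as [HAl | HBl]; [unfold l; lra | | exact HBl].
      exfalso. assert (l <= ls) by (apply Hub; split; [unfold l; lra | exact HAl]).
      unfold l in *; lra. }
  exists ls; repeat split; assumption.
Qed.

Definition std_triangle (p : point) : Prop :=
  0 <= fst p /\ 0 <= snd p /\ fst p + snd p <= 1.

Lemma closed_set_ext (S T : region) :
  (forall p, S p <-> T p) -> closed_set S -> closed_set T.
Proof.
  intros HST HS p Hp. destruct (HS p) as [e [He Hout]]; [rewrite HST; exact Hp|].
  exists e; split; [exact He|]. intros q Hq HTq. apply (Hout q Hq). apply HST; exact HTq.
Qed.

Lemma closed_std_triangle : closed_set std_triangle.
Proof.
  apply (closed_set_ext (fun p => (-1 * fst p + 0 * snd p <= 0) /\
                                  ((0 * fst p + -1 * snd p <= 0) /\ 1 * fst p + 1 * snd p <= 1))).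
  - intro p; unfold std_triangle; lra.
  - repeat apply closed_set_inter; apply closed_halfplane.
Qed.

Lemma cluster_value_near (un : nat -> R) l d N : ValAdh un l -> 0 < d ->
  exists n, (N <= n)%nat /\ Rabs (un n - l) < d.
Proof.
  intros H Hd. destruct (H (disc l (mkposreal d Hd)) N) as [n [Hn Hv]].
  - exists (mkposreal d Hd). intros z Hz; exact Hz.
  - exists n; split; assumption.
Qed.

Lemma closed_std_triangle_max_sum (K : region) p0 :
  closed_set K -> (forall p, K p -> std_triangle p) -> K p0 ->
  exists w, K w /\ forall p, K p -> fst p + snd p <= fst w + snd w.
Proof.
  intros clK HKT Kp0.
  set (E := fun t => exists p, K p /\ t = fst p + snd p).
  destruct (completeness E) as [m [Hub Hlub]].
  { exists 1. intros t [p [Kp ->]]. destruct (HKT p Kp) as [_ [_ H]]; exact H. }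
  { exists (fst p0 + snd p0), p0; split; [exact Kp0 | reflexivity]. }
  assert (Hle : forall p, K p -> fst p + snd p <= m) by (intros p Kp; apply Hub; exists p; auto).
  assert (Hnear : forall n : nat, exists p, K p /\ m - / (INR n + 1) < fst p + snd p).
  { intro n. apply NNPP; intro HN.
    assert (Hpos : 0 < / (INR n + 1)) by (apply Rinv_0_lt_compat; pose proof (pos_INR n); lra).
    assert (m <= m - / (INR n + 1)); [|lra].
    apply Hlub. intros t [p [Kp ->]].
    apply Rnot_lt_le; intro Hlt. apply HN; exists p; split; assumption. }
  set (f := fun n => epsilon (inhabits ((0, 0) : point))
                       (fun p => K p /\ m - / (INR n + 1) < fst p + snd p)).
  assert (Hf : forall n, K (f n) /\ m - / (INR n + 1) < fst (f n) + snd (f n))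
    by (intro n; apply (epsilon_spec _ _ (Hnear n))).
  destruct (Bolzano_Weierstrass (fun n => fst (f n)) (fun z => 0 <= z <= 1) (compact_P3 0 1))
    as [u Hu].
  { intro n. destruct (HKT _ (proj1 (Hf n))) as [H1 [H2 H3]]; simpl; lra. }
  exists (u, m - u). split.
  - apply closed_set_limit; [exact clK|]. intros e He.
    set (d := e / 3).
    assert (Hd : 0 < d) by (unfold d; lra).
    destruct (archimed_cor1 d Hd) as [N [HN HN0]].
    destruct (cluster_value_near _ _ d N Hu Hd) as [n [Hn Hfn]].
    destruct (Hf n) as [Kfn Hsum]. exists (f n); split; [|exact Kfn].
    assert (/ (INR n + 1) < d).
    { apply (Rlt_trans _ (/ INR N)); [|exact HN].
      apply Rinv_lt_contravar; [apply Rmult_lt_0_compat|]; apply le_INR in Hn;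
        pose proof (lt_0_INR N HN0); lra. }
    pose proof (Hle _ Kfn). apply Rabs_def2 in Hfn. simpl in Hfn.
    unfold in_ball, dist2; simpl. unfold d in *. nra.
  - intros p Kp. simpl. replace (u + (m - u)) with m by ring. exact (Hle p Kp).
Qed.

Lemma std_triangle_step u0 v0 tau l :
  0 <= u0 -> 0 <= v0 -> u0 + v0 < 1 -> 0 < tau <= 1 -> 0 <= l <= 1 ->
  std_triangle (u0 + tau * (1 - l - u0), v0 + tau * (l - v0)) /\
  u0 + v0 < (u0 + tau * (1 - l - u0)) + (v0 + tau * (l - v0)) /\
  dist2 (u0, v0) (u0 + tau * (1 - l - u0), v0 + tau * (l - v0)) <= 2 * tau^2.
Proof.
  intros Hu0 Hv0 Hsum Htau Hl.
  assert (0 <= (1 - tau) * u0) by (apply Rmult_le_pos; lra).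
  assert (0 <= (1 - tau) * v0) by (apply Rmult_le_pos; lra).
  assert (0 <= tau * (1 - l)) by (apply Rmult_le_pos; lra).
  assert (0 <= tau * l) by (apply Rmult_le_pos; lra).
  assert ((1 - l - u0)^2 <= 1) by nra. assert ((l - v0)^2 <= 1) by nra.
  unfold std_triangle, dist2; simpl. repeat split; nra.
Qed.

Lemma std_triangle_exposed_common_point (A B : region) :
  convex_set A -> closed_set A -> convex_set B -> closed_set B ->
  A (0, 0) -> B (0, 0) -> A (1, 0) -> B (0, 1) ->
  (forall s, 0 <= s <= 1 -> ~ (A (1 - s, s) /\ B (1 - s, s))) ->
  exists w, A w /\ B w /\ forall e, 0 < e -> exists q, in_ball w e q /\ ~ A q /\ ~ B q.
Proof.
  intros cvA clA cvB clB A0 B0 A1 B2 Hhyp.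
  destruct (closed_std_triangle_max_sum (fun p => (A p /\ B p) /\ std_triangle p) (0, 0))
    as [[u0 v0] [[[Aw Bw] Tw] Hmax]].
  { apply closed_set_inter; [apply closed_set_inter; assumption | exact closed_std_triangle]. }
  { intros p [_ Tp]; exact Tp. }
  { split; [split; assumption | unfold std_triangle; simpl; lra]. }
  simpl in Hmax. destruct Tw as [Hu0 [Hv0 Hsum]]; simpl in *.
  assert (Hsum' : u0 + v0 < 1).
  { destruct (Rle_lt_or_eq_dec _ _ Hsum) as [|Heq]; [assumption|]. exfalso.
    apply (Hhyp v0); [lra|].
    replace (1 - v0) with u0 by lra. split; assumption. }
  exists (u0, v0); split; [exact Aw|]; split; [exact Bw|].
  intros e He. apply NNPP; intro HN.
  assert (Hcover : forall q, in_ball (u0, v0) e q -> A q \/ B q).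
  { intros q Hq. apply NNPP; intro Hq'. apply HN. exists q. tauto. }
  (* Move from the maximiser a small step [tau] towards the hypotenuse; the segment
     from the [A]-side to the [B]-side must meet [A] and [B] beyond the maximum. *)
  set (tau := Rmin 1 (e / 2)).
  assert (Htau0 : 0 < tau) by (apply Rmin_glb_lt; lra).
  assert (Htau1 : tau <= 1) by apply Rmin_l.
  assert (Htaue : tau <= e / 2) by apply Rmin_r.
  set (a := segment_point (u0, v0) (1, 0) tau).
  set (b := segment_point (u0, v0) (0, 1) tau).
  assert (Hab : forall l, segment_point a b l =
            (u0 + tau * (1 - l - u0), v0 + tau * (l - v0)))
    by (intro l; unfold a, b, segment_point; simpl; f_equal; ring).
  destruct (segment_closed_cover_meet A B a b) as [l [Hl [HAl HBl]]]; auto.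
  { apply convex_segment_point; auto; lra. }
  { apply convex_segment_point; auto; lra. }
  { intros l Hl. apply Hcover. rewrite Hab. unfold in_ball.
    destruct (std_triangle_step u0 v0 tau l) as [_ [_ Hd]]; auto; nra. }
  rewrite Hab in HAl, HBl.
  destruct (std_triangle_step u0 v0 tau l) as [HT [Hgt _]]; auto.
  pose proof (Hmax _ (conj (conj HAl HBl) HT)). simpl in *. lra.
Qed.

Lemma exposed_common_point (A B C : region) c x y :
  convex_set A -> closed_set A -> convex_set B -> closed_set B -> convex_set C ->
  A c -> B c -> A x -> C x -> B y -> C y ->
  (forall p, ~ (A p /\ B p /\ C p)) ->
  exists w, A w /\ B w /\ forall e, 0 < e -> exists q, in_ball w e q /\ ~ A q /\ ~ B q.
Proof.
  intros cvA clA cvB clB cvC Ac Bc Ax Cx By Cy Hnone.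
  set (f := affine_map c x y).
  destruct (std_triangle_exposed_common_point (fun p => A (f p)) (fun p => B (f p)))
    as [w [Aw [Bw Hext]]].
  { apply convex_set_affine_preimage; exact cvA. }
  { apply closed_set_preimage; [apply affine_map_continuous | exact clA]. }
  { apply convex_set_affine_preimage; exact cvB. }
  { apply closed_set_preimage; [apply affine_map_continuous | exact clB]. }
  { unfold f; rewrite affine_map_origin; exact Ac. }
  { unfold f; rewrite affine_map_origin; exact Bc. }
  { unfold f; rewrite affine_map_e1; exact Ax. }
  { unfold f; rewrite affine_map_e2; exact By. }
  { intros s Hs [HA HB]. apply (Hnone (f (1 - s, s))). repeat split; [assumption..|].
    replace (1 - s, s) with (segment_point (1, 0) (0, 1) s)
      by (unfold segment_point; simpl; f_equal; ring).
    unfold f; rewrite affine_map_segment_point, affine_map_e1, affine_map_e2.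
    apply convex_segment_point; assumption. }
  exists (f w); split; [exact Aw|]; split; [exact Bw|].
  intros e He. destruct (affine_map_continuous c x y w e He) as [d [Hd Hball]].
  destruct (Hext d Hd) as [q [Hq [HAq HBq]]].
  exists (f q). split; [apply Hball; exact Hq | split; assumption].
Qed.

Lemma boundary_of_exterior_points (S : region) w :
  S w -> (forall e, 0 < e -> exists q, in_ball w e q /\ ~ S q) -> boundary S w.
Proof.
  intros Sw Hext e He. split; [exists w; split; [apply in_ball_self|]; assumption|].
  exact (Hext e He).
Qed.

Lemma closed_sets_avoid_ball (G : nat -> region) (P : nat -> Prop) w n :
  (forall l, (l < n)%nat -> P l -> closed_set (G l) /\ ~ G l w) ->
  exists r, 0 < r /\ forall l, (l < n)%nat -> P l -> forall q, in_ball w r q -> ~ G l q.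
Proof.
  induction n as [|n IH]; intros Hcl.
  - exists 1; split; [lra|]. intros l Hl; lia.
  - destruct IH as [r [Hr Hrr]]; [intros l Hl; apply Hcl; lia|].
    destruct (classic (P n)) as [Pn | nPn].
    + destruct (Hcl n ltac:(lia) Pn) as [cln Hnw].
      destruct (cln w Hnw) as [e [He Hee]].
      assert (Hm : 0 < Rmin r e) by (apply Rmin_glb_lt; assumption).
      exists (Rmin r e); split; [exact Hm|]. intros l Hl Pl q Hq.
      destruct (Nat.eq_dec l n) as [->|Hln].
      * apply Hee. apply (in_ball_mono _ _ (Rmin r e)); [exact Hm | apply Rmin_r | exact Hq].
      * apply (Hrr l); [lia | exact Pl|].
        apply (in_ball_mono _ _ (Rmin r e)); [exact Hm | apply Rmin_l | exact Hq].
    + exists r; split; [exact Hr|]. intros l Hl Pl.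
      destruct (Nat.eq_dec l n) as [->|Hln]; [contradiction|]. apply Hrr; [lia | exact Pl].
Qed.

Lemma third_index k i j : (3 <= k)%nat -> exists l, (l < k)%nat /\ l <> i /\ l <> j.
Proof.
  intros Hk.
  destruct (Nat.eq_dec i 0); destruct (Nat.eq_dec j 0);
    destruct (Nat.eq_dec i 1); destruct (Nat.eq_dec j 1); subst;
    first [exists 0%nat; lia | exists 1%nat; lia | exists 2%nat; lia].
Qed.

Lemma pair_union_vertex (k : nat) (G : nat -> region) :
  (3 <= k)%nat ->
  (forall i, (i < k)%nat -> convex_set (G i) /\ compact_set (G i)) ->
  exactly_2_intersecting k G ->
  forall i j, (i < k)%nat -> (j < k)%nat -> i <> j ->
  exists p, G i p /\ G j p /\ union_vertex k G p.
Proof.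
  intros Hk Hcv [H2 H3] i j Hi Hj Hij.
  destruct (third_index k i j Hk) as [l [Hl [Hli Hlj]]].
  destruct (H2 i j Hi Hj Hij) as [c [Hci Hcj]].
  destruct (H2 i l Hi Hl (not_eq_sym Hli)) as [x [Hxi Hxl]].
  destruct (H2 j l Hj Hl (not_eq_sym Hlj)) as [y [Hyj Hyl]].
  destruct (Hcv i Hi) as [cvi [cli _]].
  destruct (Hcv j Hj) as [cvj [clj _]].
  destruct (Hcv l Hl) as [cvl _].
  destruct (exposed_common_point (G i) (G j) (G l) c x y) as [w [Hwi [Hwj Hext]]]; auto.
  { intros p Hp. apply (H3 i j l); auto. exists p; exact Hp. }
  destruct (closed_sets_avoid_ball G (fun l => l <> i /\ l <> j) w k) as [r [Hr Hrr]].
  { intros l' Hl' [Hl'i Hl'j]. split; [apply Hcv; exact Hl'|].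
    intro Hl'w. apply (H3 i j l'); auto. exists w; auto. }
  (* Near [w] the union coincides with [G i :|: G j], since the other members stay away. *)
  assert (Hout : forall e, 0 < e -> exists q, in_ball w e q /\ ~ family_union k G q).
  { intros e He.
    assert (Hm : 0 < Rmin e r) by (apply Rmin_glb_lt; assumption).
    destruct (Hext _ Hm) as [q [Hq [Hqi Hqj]]].
    exists q. split; [apply (in_ball_mono _ _ (Rmin e r)); [exact Hm | apply Rmin_l | exact Hq]|].
    intros [l' [Hl' Hg]].
    destruct (Nat.eq_dec l' i) as [->|Hl'i]; [contradiction|].
    destruct (Nat.eq_dec l' j) as [->|Hl'j]; [contradiction|].
    apply (Hrr l' Hl' (conj Hl'i Hl'j) q); [|exact Hg].
    apply (in_ball_mono _ _ (Rmin e r)); [exact Hm | apply Rmin_r | exact Hq]. }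
  assert (Hout_of : forall m, (m < k)%nat -> forall e, 0 < e ->
                      exists q, in_ball w e q /\ ~ G m q).
  { intros m Hm e He. destruct (Hout e He) as [q [Hq Hnq]].
    exists q; split; [exact Hq|]. intro Hmq; apply Hnq; exists m; auto. }
  exists w; split; [exact Hwi|]; split; [exact Hwj|]; split.
  - exists i, j. do 3 (split; [assumption|]).
    split; apply boundary_of_exterior_points; auto.
  - apply boundary_of_exterior_points; [exists i; split; assumption | exact Hout].
Qed.

Fixpoint pairs (n : nat) : list (nat * nat) :=
  match n with
  | O => nil
  | S n' => pairs n' ++ map (fun i => (i, n')) (seq 0 n')
  end.

Lemma length_pairs n : length (pairs n) = binom2 n.
Proof.
  induction n as [|n IH]; [reflexivity|].
  simpl. rewrite length_app, length_map, length_seq, IH.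
  unfold binom2.
  replace (S n * (S n - 1))%nat with (n * (n - 1) + n * 2)%nat.
  - rewrite Nat.div_add; lia.
  - destruct n; simpl; [reflexivity|]. rewrite Nat.sub_0_r. nia.
Qed.

Lemma in_pairs n i j : In (i, j) (pairs n) <-> (i < j < n)%nat.
Proof.
  induction n as [|n IH]; simpl; [split; [tauto|lia]|].
  rewrite in_app_iff, IH, in_map_iff. split.
  - intros [H|[i' [He Hi]]]; [lia|]. injection He; intros; subst.
    apply in_seq in Hi; lia.
  - intros H. destruct (Nat.eq_dec j n) as [->|Hn]; [right|left; lia].
    exists i; split; [reflexivity|]. apply in_seq; lia.
Qed.

Lemma NoDup_pairs n : NoDup (pairs n).
Proof.
  induction n as [|n IH]; simpl; [constructor|].
  apply NoDup_app; [exact IH| |].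
  - apply NoDup_map_NoDup_ForallPairs; [|apply seq_NoDup].
    intros a b _ _ H; injection H; auto.
  - intros [a b] H1 H2. apply in_pairs in H1. apply in_map_iff in H2.
    destruct H2 as [z [Hz _]]. injection Hz; intros; subst; lia.
Qed.

Lemma exactly_2_intersecting_pair_unique k G i j i' j' p :
  exactly_2_intersecting k G -> (i < j < k)%nat -> (i' < j' < k)%nat ->
  G i p -> G j p -> G i' p -> G j' p -> (i, j) = (i', j').
Proof.
  intros [_ H3] Hij Hij' Hi Hj Hi' Hj'.
  destruct (Nat.eq_dec i i') as [<-|Hii]; destruct (Nat.eq_dec j j') as [<-|Hjj];
    [reflexivity | exfalso..].
  - apply (H3 i j j'); [lia..|]. exists p; auto.
  - apply (H3 i j i'); [lia..|]. exists p; auto.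
  - destruct (Nat.eq_dec j i').
    + apply (H3 i i' j'); [lia..|]. exists p; auto.
    + apply (H3 i j i'); [lia..|]. exists p; auto.
Qed.

Lemma union_complexity_ge_binom2 k G :
  exactly_2_intersecting k G ->
  (forall i j, (i < j < k)%nat -> exists p, G i p /\ G j p /\ union_vertex k G p) ->
  union_complexity_ge k G (binom2 k).
Proof.
  intros H2i Hpair.
  set (vertex_of := fun ij : nat * nat => epsilon (inhabits ((0, 0) : point))
         (fun p => G (fst ij) p /\ G (snd ij) p /\ union_vertex k G p)).
  assert (Hv : forall ij, In ij (pairs k) ->
     G (fst ij) (vertex_of ij) /\ G (snd ij) (vertex_of ij) /\ union_vertex k G (vertex_of ij)).
  { intros [i j] Hin. apply epsilon_spec, Hpair, in_pairs, Hin. }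
  exists (map vertex_of (pairs k)). split; [rewrite length_map; apply length_pairs|]. split.
  - apply NoDup_map_NoDup_ForallPairs; [|apply NoDup_pairs].
    intros [i j] [i' j'] Hin Hin' Heq.
    destruct (Hv _ Hin) as [Hi [Hj _]]. destruct (Hv _ Hin') as [Hi' [Hj' _]].
    simpl in *. rewrite Heq in Hi, Hj.
    apply (exactly_2_intersecting_pair_unique k G _ _ _ _ (vertex_of (i', j')));
      [exact H2i | apply in_pairs, Hin | apply in_pairs, Hin' | assumption..].
  - intros p Hp. apply in_map_iff in Hp. destruct Hp as [ij [<- Hin]].
    apply Hv; exact Hin.
Qed.

Theorem lemma3p3 (k : nat) (G : nat -> region) :
  (3 <= k)%nat ->
  (forall i, (i < k)%nat -> convex_set (G i) /\ compact_set (G i)) ->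
  exactly_2_intersecting k G ->
  union_complexity_ge k G (binom2 k).
Proof.
  intros Hk Hcv H2i.
  apply union_complexity_ge_binom2; [exact H2i|].
  intros i j Hij. apply pair_union_vertex; auto; lia.
Qed.
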